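(* Let $(x^*,u^* )$ be a local solution of problem (P) with radius $\delta>0$, for $k=1,2,\dots$ let $(x_k,u_k)$ be a global solution of $(P_k)$, let $\mu_k(t,s):=\frac{\chi_{(t-\tau,t)}(s)\exp(k\,x_k(s))}{\int_{t-\tau}^t\exp(k\,x_k(\hat s))\,\mathrm{d}\hat s}$ (componentwise), and let $\mu\in L^\infty_w(I;\mathcal{M}(I_\tau))^n$ be a weak-$\star$ limit in $(L^1(I;C(I_\tau))^n)^*$ of a subsequence of $(\mu_k)$ satisfying $\mu(t)\in\partial\max x^*_t$ for a.a. $t\in I$. Then $\mu\ge0$ and, for almost all $t\in I$ and all $i=1,\dots,n$, $\|\mu_i(t)\|_{\mathcal{M}(I_\tau)}=1$ and $\operatorname{supp}(\mu_i(t))\subset\operatorname{argmax}_{s\in[t-\tau,t]}x^*_i(s)$.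
   Context: Let $n,m\ge1$, $T>0$, $\tau>0$, $I=[0,T]$, $I_\tau=[-\tau,T]$. For $x\in C(I_\tau;\mathbb{R}^n)$, $t\in I$: $\max x_t:=\max_{s\in[t-\tau,t]}x(s)$ and $\mathrm{LIE}_k(x_t):=\frac1k\log\big(\int_{t-\tau}^t\exp(kx(s))\,\mathrm{d}s\big)$, componentwise. Standing assumptions: $F(x,v,u)=F_0(x,v)+F_1(x,v)u$ with $F_0:\mathbb{R}^n\times\mathbb{R}^n\to\mathbb{R}^n$, $F_1:\mathbb{R}^n\times\mathbb{R}^n\to\mathbb{R}^{n\times m}$ globally Lipschitz and $C^1$; $\phi\in C([-\tau,0];\mathbb{R}^n)$; $U\subset\mathbb{R}^m$ nonempty convex compact; $j:I\times\mathbb{R}^n\times\mathbb{R}^m\to\mathbb{R}$ a nonnegative normal integrand, convex in its third argument, differentiable in its second argument with $j_x$ continuous in the second and third arguments. Feasible controls: $u\in L^\infty(I;\mathbb{R}^m)$, $u(t)\in U$ a.e. Problem (P): minimize $J(x,u)=\int_0^Tj(t,x(t),u(t))\,\mathrm{d}t$ over feasible $u$, $x\in C(I_\tau;\mathbb{R}^n)\cap W^{1,\infty}(I;\mathbb{R}^n)$ solving $x'(t)=F(x(t),\max x_t,u(t))$ a.e. on $(0,T)$, $x=\phi$ on $[-\tau,0]$. Local solution with radius $\delta$: feasible $u^*$ with state $x^*$ and $J(x^*,u^* )\le J(x,u)$ for all feasible $u$ with $\|u-u^*\|_{L^2}\le\delta$. Problem $(P_k)$: minimize $\int_0^Tj(t,x(t),u(t))+\frac12|u(t)-u^*(t)|^2\,\mathrm{d}t$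 over feasible $u$ with $\|u-u^*\|_{L^2}\le\delta$, $x$ solving $x'(t)=F(x(t),\mathrm{LIE}_k(x_t),u(t))$ a.e. on $I$, $x=\phi$ on $[-\tau,0]$. $\mathcal{M}(I_\tau)$: regular signed Borel measures on $I_\tau$ with total variation norm. $L^\infty_w(I;\mathcal{M}(I_\tau))$: equivalence classes of weak-$\star$ measurable $\nu:I\to\mathcal{M}(I_\tau)$ with $|\langle\nu(t),z\rangle|\le c\|z\|_{C(I_\tau)}$ for a.a. $t$, all $z$, some $c\ge0$, identified with the dual of $L^1(I;C(I_\tau))$ via $\langle\nu,z\rangle=\int_0^T\langle\nu(t),z(t)\rangle\,\mathrm{d}t$; $\mu_k$ is identified with $t\mapsto\mu_k(t,s)\,\mathrm{d}s$. $\mu(t)\in\partial\max x^*_t$ means that for each $i$, $\mu_i(t)$ lies in the convex subdifferential of $C(I_\tau)\ni w\mapsto\max_{s\in[t-\tau,t]}w(s)$ at $x^*_i$. $\operatorname{supp}$ is the support of a measure. *)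

From HB Require Import structures.
From mathcomp Require Import all_boot all_order all_algebra.
From mathcomp Require Import all_classical all_reals all_analysis.
Set Implicit Arguments. Unset Strict Implicit. Unset Printing Implicit Defensive.
Import Order.TTheory GRing.Theory Num.Theory.
Import numFieldNormedType.Exports.
Local Open Scope classical_set_scope.
Local Open Scope ring_scope.

Section OCP_defs.
Context {R : realType}.
Local Notation leb := (@lebesgue_measure R).

Definition II (T : R) : set R := `[0, T].
Definition Itau (tau T : R) : set R := `[- tau, T].
Definition win (tau t : R) : set R := `[t - tau, t].

Definition sqnorm {p : nat} (v : 'rV[R]_p) : R := \sum_(i < p) (v ord0 i) ^+ 2.

Definition maxw {n : nat} (tau : R) (x : R -> 'rV[R]_n) (t : R) : 'rV[R]_n :=
  \row_i sup [set (x s) ord0 i | s in win tau t].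

Definition LIE {n : nat} (k : nat) (tau : R) (x : R -> 'rV[R]_n) (t : R) : 'rV[R]_n :=
  \row_i (k%:R^-1 * ln (\int[leb]_(s in win tau t) expR (k%:R * x s ord0 i))).

Definition Fdyn {n m : nat} (F0 : 'rV[R]_n -> 'rV[R]_n -> 'rV[R]_n)
  (F1 : 'rV[R]_n -> 'rV[R]_n -> 'M[R]_(n, m)) (x v : 'rV[R]_n) (u : 'rV[R]_m) : 'rV[R]_n :=
  F0 x v + (F1 x v *m u^T)^T.

Definition glob_lipschitz {U V : normedModType R} (f : U -> V) :=
  exists L : R, forall p q, `|f p - f q| <= L * `|p - q|.

Definition C1 {U V : normedModType R} (f : U -> V) :=
  (forall p, differentiable f p) /\ (forall v, continuous (fun p => 'd f p v)).

Definition leb_measurable (A : set R) :=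
  exists B N : set R, [/\ measurable B, measurable N, leb N = 0%E &
    (A `\` B) `|` (B `\` A) `<=` N].

(** j normal integrand on I x R^n x R^m (finite valued): lsc in (x,u) for each t
    and L(I) (x) B(R^n x R^m)-measurable *)
Definition normal_integrand {n m : nat} (T : R)
    (j : R -> 'rV[R]_n -> 'rV[R]_m -> R) :=
  (forall t, II T t -> forall a : R,
      open [set p : 'rV[R]_n * 'rV[R]_m | a < j t p.1 p.2]) /\
  (forall c : R,
     <<s [set S | exists (A : set R) (B : set ('rV[R]_n * 'rV[R]_m)),
                   [/\ leb_measurable A, A `<=` II T, open B & S = A `*` B]] >>
       [set q : R * ('rV[R]_n * 'rV[R]_m) | II T q.1 /\ j q.1 q.2.1 q.2.2 <= c]).

Definition jx {n m : nat} (j : R -> 'rV[R]_n -> 'rV[R]_m -> R) (t : R)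
    (x : 'rV[R]_n) (u : 'rV[R]_m) (v : 'rV[R]_n) : R :=
  'd (fun y : 'rV[R]_n => j t y u) x v.

Definition j_assumptions {n m : nat} (T : R) (j : R -> 'rV[R]_n -> 'rV[R]_m -> R) :=
  [/\ (forall t x u, II T t -> 0 <= j t x u),
      normal_integrand T j,
      (forall t x, II T t -> forall (a b : 'rV[R]_m) (l : R), 0 <= l <= 1 ->
          j t x (l *: a + (1 - l) *: b) <= l * j t x a + (1 - l) * j t x b),
      (forall t, II T t -> forall (x : 'rV[R]_n) (u : 'rV[R]_m), differentiable (fun y : 'rV[R]_n => j t y u) x) &
      (forall t, II T t -> forall v : 'rV[R]_n,
          continuous (fun p : 'rV[R]_n * 'rV[R]_m => jx j t p.1 p.2 v))].

Definition U_assumptions {m : nat} (U : set 'rV[R]_m) :=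
  [/\ U !=set0,
      (forall a b (l : R), U a -> U b -> 0 <= l <= 1 -> U (l *: a + (1 - l) *: b)) &
      compact U].

Definition feasible {m : nat} (T : R) (U : set 'rV[R]_m) (u : R -> 'rV[R]_m) :=
  [/\ (forall i, measurable_fun (II T) (fun t => u t ord0 i)),
      (exists C : R, {ae leb, forall t, II T t -> `|u t| <= C}) &
      {ae leb, forall t, II T t -> U (u t)}].

(** x in W^{1,oo}(I;R^n) (continuous representative: Lipschitz on I) *)
Definition W1inf {n : nat} (T : R) (x : R -> 'rV[R]_n) :=
  exists L : R, forall s t, II T s -> II T t -> `|x s - x t| <= L * `|s - t|.

Definition state_eq {n m : nat} (T tau : R)
    (G : (R -> 'rV[R]_n) -> R -> 'rV[R]_n)
    (F0 : 'rV[R]_n -> 'rV[R]_n -> 'rV[R]_n) (F1 : 'rV[R]_n -> 'rV[R]_n -> 'M[R]_(n, m))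
    (phi : R -> 'rV[R]_n) (u : R -> 'rV[R]_m) (x : R -> 'rV[R]_n) :=
  [/\ {within Itau tau T, continuous x}, W1inf T x,
      (forall t, Itau tau 0 t -> x t = phi t) &
      {ae leb, forall t, (`]0, T[%classic : set R) t ->
         derivable x t 1 /\ 'D_1 x t = Fdyn F0 F1 (x t) (G x t) (u t)}].

Definition Jcost {n m : nat} (T : R) (j : R -> 'rV[R]_n -> 'rV[R]_m -> R)
    (x : R -> 'rV[R]_n) (u : R -> 'rV[R]_m) : \bar R :=
  (\int[leb]_(t in II T) (j t (x t) (u t))%:E)%E.

Definition Jkcost {n m : nat} (T : R) (j : R -> 'rV[R]_n -> 'rV[R]_m -> R)
    (us : R -> 'rV[R]_m) (x : R -> 'rV[R]_n) (u : R -> 'rV[R]_m) : \bar R :=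
  (\int[leb]_(t in II T) (j t (x t) (u t) + 2^-1 * sqnorm (u t - us t))%:E)%E.

Definition L2ball {m : nat} (T delta : R) (us u : R -> 'rV[R]_m) :=
  (\int[leb]_(t in II T) (sqnorm (u t - us t))%:E <= (delta ^+ 2)%:E)%E.

Definition local_sol_P {n m : nat} (T tau : R)
    (F0 : 'rV[R]_n -> 'rV[R]_n -> 'rV[R]_n) (F1 : 'rV[R]_n -> 'rV[R]_n -> 'M[R]_(n, m))
    (phi : R -> 'rV[R]_n) (U : set 'rV[R]_m) (j : R -> 'rV[R]_n -> 'rV[R]_m -> R)
    (delta : R) (xs : R -> 'rV[R]_n) (us : R -> 'rV[R]_m) :=
  [/\ feasible T U us, state_eq T tau (maxw tau) F0 F1 phi us xs &
      forall u x, feasible T U u -> L2ball T delta us u ->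
        state_eq T tau (maxw tau) F0 F1 phi u x -> (Jcost T j xs us <= Jcost T j x u)%E].

Definition global_sol_Pk {n m : nat} (T tau : R)
    (F0 : 'rV[R]_n -> 'rV[R]_n -> 'rV[R]_n) (F1 : 'rV[R]_n -> 'rV[R]_n -> 'M[R]_(n, m))
    (phi : R -> 'rV[R]_n) (U : set 'rV[R]_m) (j : R -> 'rV[R]_n -> 'rV[R]_m -> R)
    (delta : R) (us : R -> 'rV[R]_m) (k : nat) (xk : R -> 'rV[R]_n) (uk : R -> 'rV[R]_m) :=
  [/\ feasible T U uk, L2ball T delta us uk, state_eq T tau (LIE k tau) F0 F1 phi uk xk &
      forall u x, feasible T U u -> L2ball T delta us u ->
        state_eq T tau (LIE k tau) F0 F1 phi u x ->
        (Jkcost T j us xk uk <= Jkcost T j us x u)%E].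

(** M(I_tau): finite signed Borel measures on R concentrated on I_tau
    (on the compact metric space I_tau every finite Borel measure is regular) *)
Definition sgnmeas := {charge set (measurableTypeR R) -> \bar R}.

Definition in_M (tau T : R) (nu : sgnmeas) :=
  forall A, measurable A -> A `<=` ~` Itau tau T -> nu A = 0%E.

Lemma hahn_ex (nu : sgnmeas) :
  exists PN : set R * set R, hahn_decomposition nu PN.1 PN.2.
Proof. by have [P [N h]] := Hahn_decomposition nu; exists (P, N). Qed.

Definition hahnPN (nu : sgnmeas) := projT2 (cid (hahn_ex nu)).

Definition jpos (nu : sgnmeas) := jordan_pos (hahnPN nu).
Definition jneg (nu : sgnmeas) := jordan_neg (hahnPN nu).
Definition varM (nu : sgnmeas) := charge_variation (hahnPN nu).

Definition pairM (tau T : R) (nu : sgnmeas) (f : R -> R) : R :=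
  (\int[jpos nu]_(s in Itau tau T) f s) - (\int[jneg nu]_(s in Itau tau T) f s).

Definition tvnorm (tau T : R) (nu : sgnmeas) : R := fine (varM nu (Itau tau T)).

Definition nonnegM (nu : sgnmeas) := forall A, measurable A -> (0 <= nu A)%E.

Definition suppM (nu : sgnmeas) : set R :=
  [set s | forall O : set R, open O -> O s -> (0 < varM nu O)%E].

Definition argmaxw (tau t : R) (y : R -> R) : set R :=
  [set s | win tau t s /\ forall r, win tau t r -> y r <= y s].

Definition supI (tau T : R) (z : R -> R) : R := sup [set `|z s| | s in Itau tau T].

Definition Linf_w {n : nat} (tau T : R) (mu : R -> 'I_n -> sgnmeas) :=
  [/\ (forall t i, II T t -> in_M tau T (mu t i)),
      (forall i (z : R -> R), {within Itau tau T, continuous z} ->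
          measurable_fun (II T) (fun t => pairM tau T (mu t i) z)) &
      (exists c : R, {ae leb, forall t, II T t -> forall i (z : R -> R),
          {within Itau tau T, continuous z} ->
          `|pairM tau T (mu t i) z| <= c * supI tau T z})].

Definition simple_C (tau T : R) (g : R -> R -> R) :=
  exists (N : nat) (A : nat -> set R) (h : nat -> R -> R),
    [/\ (forall l, leb_measurable (A l)),
        (forall l, {within Itau tau T, continuous (h l)}) &
        (forall t s, g t s = \sum_(l < N) \1_(A l) t * h l s)].

Definition strongly_meas (tau T : R) (z : R -> R -> R) :=
  exists g : nat -> R -> R -> R, (forall p, simple_C tau T (g p)) /\
    {ae leb, forall t, II T t ->
       (fun p => supI tau T (fun s => g p t s - z t s)) @ \oo --> 0}.

Definition L1C (tau T : R) (z : R -> R -> R) :=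
  [/\ (forall t, II T t -> {within Itau tau T, continuous (z t)}),
      strongly_meas tau T z &
      (\int[leb]_(t in II T) (supI tau T (z t))%:E < +oo)%E].

Definition muk {n : nat} (tau : R) (k : nat) (xk : R -> 'rV[R]_n) (i : 'I_n) (t s : R) : R :=
  \1_(`]t - tau, t[) s * expR (k%:R * xk s ord0 i) /
    \int[leb]_(r in win tau t) expR (k%:R * xk r ord0 i).

Definition pair_k {n : nat} (tau T : R) (k : nat) (xk : R -> 'rV[R]_n)
    (z : 'I_n -> R -> R -> R) : R :=
  \sum_(i < n) \int[leb]_(t in II T) \int[leb]_(s in Itau tau T) (muk tau k xk i t s * z i t s).

Definition pair_mu {n : nat} (tau T : R) (mu : R -> 'I_n -> sgnmeas)
    (z : 'I_n -> R -> R -> R) : R :=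
  \sum_(i < n) \int[leb]_(t in II T) pairM tau T (mu t i) (z i t).

Definition wstar_limit {n : nat} (tau T : R) (xk : nat -> R -> 'rV[R]_n)
    (phi : nat -> nat) (mu : R -> 'I_n -> sgnmeas) :=
  forall z : 'I_n -> R -> R -> R, (forall i, L1C tau T (z i)) ->
    (fun p => pair_k tau T (phi p) (xk (phi p)) z) @ \oo --> pair_mu tau T mu z.

Definition in_subdiff_max {n : nat} (tau T t : R) (xs : R -> 'rV[R]_n)
    (mu : R -> 'I_n -> sgnmeas) :=
  forall (i : 'I_n) (w : R -> R), {within Itau tau T, continuous w} ->
    sup [set w s | s in win tau t] - sup [set xs s ord0 i | s in win tau t]
      >= pairM tau T (mu t i) (fun s => w s - xs s ord0 i).

End OCP_defs.

(* Testing the subdifferential inequality <mu, w - x> <= max_W w - max_W x with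
   w = x + g shows <mu, g> <= c whenever x + g <= max_W x + c on the window W.
   With g = -h, 0 <= h <= 1 continuous, this gives <mu, h> >= 0, hence mu >= 0 by
   approximating indicators of half-open intervals; g = 1 and g = -1 give
   mu(I_tau) = 1; a tent g around a point s outside the argmax, scaled by the gap
   between x and its maximum near s, shows that mu vanishes near s.
   Only mu(t) in the subdifferential of max x*_t and the continuity of x* are
   used. *)

From HB Require Import structures.
From mathcomp Require Import all_boot all_order all_algebra.
From mathcomp Require Import all_classical all_reals all_analysis.
From mathcomp Require Import measurable_realfun lra.
Import Order.TTheory GRing.Theory Num.Theory.
Import numFieldNormedType.Exports.
Local Open Scope classical_set_scope.
Local Open Scope ring_scope.

Section finite_measure_ocitv.
Context {R : realType} (m : {finite_measure set (measurableTypeR R) -> \bar R}).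

Definition ocitv_restr : set (ocitv_type R) -> \bar R := m.

Let ocitv_restr0 : ocitv_restr set0 = 0%E. Proof. exact: measure0. Qed.

Let ocitv_restr_ge0 A : (0 <= ocitv_restr A)%E. Proof. exact: measure_ge0. Qed.

Let ocitv_restr_semi_sigma_additive : semi_sigma_additive ocitv_restr.
Proof.
move=> F mF tF mU; apply: (@measure_semi_sigma_additive _ _ _ m F) => //.
- by move=> i; apply: sub_sigma_algebra; exact: mF.
- exact: sub_sigma_algebra.
Qed.

HB.instance Definition _ := isMeasure.Build _ _ _ ocitv_restr
  ocitv_restr0 ocitv_restr_ge0 ocitv_restr_semi_sigma_additive.

Lemma finite_measure_mu_ext A : measurable A -> m A = mu_ext ocitv_restr A.
Proof.
move=> mA; symmetry; apply: (measure_extension_unique _ _ mA) => //.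
exists (fun k : nat => `]- k%:R, k%:R]%classic).
  apply/seteqP; split=> // r _ /=.
  have [k rk] : exists k : nat, `|r| < k%:R.
    by exists (Num.truncn `|r|).+1; exact: truncnS_gt.
  exists k => //=; rewrite in_itv /=; apply/andP; split.
    by rewrite ltrNl (le_lt_trans _ rk) // ler_normr lexx orbT.
  by rewrite ltW // (le_lt_trans _ rk) // ler_norm.
move=> k; split; first exact: is_ocitv.
by rewrite /ocitv_restr ltey_eq fin_num_measure //; apply: sub_sigma_algebra; exact: is_ocitv.
Qed.

End finite_measure_ocitv.

(* m1 and m2 are the outer-measure extensions of their values on half-open
   intervals, i.e. infima over countable covers by such intervals. *)
Lemma le_finite_measure_ocitv {R : realType}
    (m1 m2 : {finite_measure set (measurableTypeR R) -> \bar R}) :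
  (forall a b : R, (m1 `]a, b]%classic <= m2 `]a, b]%classic)%E) ->
  forall A, measurable A -> (m1 A <= m2 A)%E.
Proof.
move=> le_m A mA; rewrite (finite_measure_mu_ext m1 _ mA) (finite_measure_mu_ext m2 _ mA).
apply: le_ereal_inf_tmp => _ [F [mF AF] <-].
apply: (@le_trans _ _ (\sum_(k <oo) ocitv_restr m1 (F k))%E).
  by apply: ereal_inf_lbound; exists F.
apply: lee_nneseries => [k _ _|k _]; first exact: measure_ge0.
by case/ocitvP: (mF k) => [->|[ab _ ->]]; [rewrite !measure0 | exact: le_m].
Qed.

Section bounded_integration.
Context d (T : measurableType d) (R : realType).
Variable m : {finite_measure set T -> \bar R}.

Lemma bounded_integrable (D : set T) (g : T -> R) (C : R) :
  measurable D -> measurable_fun D g -> (forall r, `|g r| <= C) ->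
  m.-integrable D (EFin \o g).
Proof.
move=> mD mg gC; apply: measurable_bounded_integrable => //.
  by rewrite ltey_eq fin_num_measure.
by exists C; split; [exact: num_real | move=> M CM r _; exact: le_trans (gC r) (ltW CM)].
Qed.

Lemma bounded_cvg_Rintegral (D : set T) (g : nat -> T -> R) (f : T -> R) (C : R) :
  measurable D -> (forall n, measurable_fun D (g n)) -> measurable_fun D f ->
  (forall r, D r -> g ^~ r @ \oo --> f r) -> (forall n r, `|g n r| <= C) ->
  (fun n => \int[m]_(r in D) g n r) @ \oo --> \int[m]_(r in D) f r.
Proof.
move=> mD mg mf gf gC.
have mEg n : measurable_fun D (EFin \o g n) by exact/measurable_EFinP.
have mEf : measurable_fun D (EFin \o f) by exact/measurable_EFinP.
have gf_ae : {ae m, forall r, D r -> (EFin \o g n) r @[n --> \oo] --> (EFin \o f) r}.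
  by apply: aeW => r Dr; apply/cvg_EFin; [exact: nearW | exact: gf].
have gC_ae : {ae m, forall r n, D r -> (`|(EFin \o g n) r| <= (EFin \o cst C) r)%E}.
  by apply: aeW => r n _ /=; rewrite lee_fin gC.
have [intf _ cvg_int] := dominated_convergence mD mEg mEf gf_ae
  (finite_measure_integrable_cst m C mD) gC_ae.
apply: fine_cvg; rewrite fineK; [exact: cvg_int | exact: integrable_fin_num].
Qed.

End bounded_integration.

Arguments bounded_integrable {d T R} m {D g C}.
Arguments bounded_cvg_Rintegral {d T R} m {D g f C}.

Section cutoff_functions.
Context {R : realType}.
Implicit Types (a b e r s y : R) (n : nat).

Definition clamp01 y := Num.max 0 (Num.min 1 y).

Lemma clamp01_ge0 y : 0 <= clamp01 y. Proof. by rewrite le_max lexx. Qed.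

Lemma clamp01_le1 y : clamp01 y <= 1.
Proof. by rewrite ge_max ler01 ge_min lexx. Qed.

Lemma normr_clamp01_le1 y : `|clamp01 y| <= 1.
Proof. by rewrite ger0_norm ?clamp01_ge0 ?clamp01_le1. Qed.

Lemma clamp01_le0 y : y <= 0 -> clamp01 y = 0.
Proof. by move=> y0; apply/le_anti; rewrite clamp01_ge0 ge_max lexx ge_min y0 orbT. Qed.

Lemma clamp01_ge1 y : 1 <= y -> clamp01 y = 1.
Proof. by move=> y1; apply/le_anti; rewrite clamp01_le1 le_max le_min lexx y1 orbT. Qed.

Lemma continuous_clamp01 (f : R -> R) : continuous f -> continuous (clamp01 \o f).
Proof.
move=> cf r; apply: (@continuous_max _ _ (cst 0) (fun r => Num.min 1 (f r))).
  exact: cst_continuous.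
by apply: (@continuous_min _ _ (cst 1)); [exact: cst_continuous | exact: cf].
Qed.

Definition ramp a b n r := clamp01 (Num.min (n%:R * (r - a)) (1 - n%:R * (r - b))).

Lemma continuous_ramp a b n : continuous (ramp a b n).
Proof.
apply: continuous_clamp01 => r.
apply: (@continuous_min _ _ (fun r => n%:R * (r - a)) (fun r => 1 - n%:R * (r - b))).
  by apply: cvgM; [exact: cvg_cst | apply: cvgB; [exact: cvg_id | exact: cvg_cst]].
apply: cvgB; first exact: cvg_cst.
by apply: cvgM; [exact: cvg_cst | apply: cvgB; [exact: cvg_id | exact: cvg_cst]].
Qed.

Lemma ramp_cvg_indic a b r : ramp a b n r @[n --> \oo] --> (\1_(`]a, b]%classic) r : R).
Proof.
rewrite indicE mem_setE in_itv /=.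
have [ra|ar] := leP r a.
  suff -> : (fun n => ramp a b n r) = cst 0 by exact: cvg_cst.
  by apply/funext => n; apply: clamp01_le0; rewrite ge_min mulr_ge0_le0 ?subr_le0.
have [rb|br] /= := leP r b.
  apply: cvg_near_cst; near=> n; apply: clamp01_ge1.
  rewrite le_min lerDl oppr_ge0 mulr_ge0_le0 ?subr_le0 // andbT.
  rewrite -ler_pdivrMr ?subr_gt0 // mul1r.
  by near: n; exact: nbhs_infty_ger.
apply: cvg_near_cst; near=> n; apply: clamp01_le0.
rewrite ge_min; apply/orP; right; rewrite subr_le0 -ler_pdivrMr ?subr_gt0 // mul1r.
by near: n; exact: nbhs_infty_ger.
Unshelve. all: by end_near.
Qed.

Definition tent s e r := clamp01 (2 - `|r - s| / e).

Lemma continuous_tent s e : continuous (tent s e).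
Proof.
apply: continuous_clamp01 => r; apply: cvgB; first exact: cvg_cst.
apply: cvgM; last exact: cvg_cst.
apply: (@continuous_comp _ _ _ (fun r => r - s) Num.norm); last exact: norm_continuous.
by apply: cvgB; [exact: cvg_id | exact: cvg_cst].
Qed.

Lemma tent_ball s e r : 0 < e -> ball s e r -> tent s e r = 1.
Proof.
move=> e0; rewrite -ball_normE /ball_ /= distrC => rs; apply: clamp01_ge1.
have : `|r - s| / e <= 1 by rewrite ler_pdivrMr // mul1r ltW.
lra.
Qed.

Lemma tent_out s e r : 0 < e -> 2 * e <= `|r - s| -> tent s e r = 0.
Proof. by move=> e0 rs; apply: clamp01_le0; rewrite subr_le0 ler_pdivlMr. Qed.

End cutoff_functions.

Lemma continuous_measurable_fun_on {R : realType} {D : set (measurableTypeR R)} {g : R -> R} :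
  measurable D -> continuous g -> measurable_fun D (g : measurableTypeR R -> R).
Proof.
move=> mD /continuous_measurable_fun mg.
exact: measurable_funS measurableT (@subsetT _ D) mg.
Qed.

Section signed_measure.
Context {R : realType}.
Variables (tau T : R) (nu : @sgnmeas R).
Local Notation D := (Itau tau T).

Let mD : measurable (D : set (measurableTypeR R)). Proof. exact: measurable_itv. Qed.

Lemma sgnmeas_jordan A : measurable A -> nu A = (jpos nu A - jneg nu A)%E.
Proof.
move=> mA; rewrite /jpos /jneg (jordan_decomp (hahnPN nu) mA) /cadd /cscale /=.
by rewrite cscaleN1.
Qed.

Lemma nonnegM_ocitv : (forall a b : R, (0 <= nu `]a, b]%classic)%E) -> nonnegM nu.
Proof.
move=> nu_ge0 A mA; rewrite sgnmeas_jordan // sube_ge0 ?fin_num_measure //.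
apply: le_finite_measure_ocitv => // a b.
by rewrite -sube_ge0 ?fin_num_measure // -sgnmeas_jordan.
Qed.

Lemma jneg_nonnegM : nonnegM nu -> forall A, measurable A -> jneg nu A = 0%E.
Proof.
move=> nu_ge0 A mA; apply/le_anti; rewrite measure_ge0 andbT.
rewrite /jneg jordan_negE cjordan_negE /crestr0 mem_set //= /crestr leeNl oppe0.
by apply: nu_ge0; apply: measurableI => //; case: (hahnPN nu) => _ [].
Qed.

Lemma jpos_nonnegM : nonnegM nu -> forall A, measurable A -> jpos nu A = nu A.
Proof. by move=> nu_ge0 A mA; rewrite sgnmeas_jordan // jneg_nonnegM // sube0. Qed.

Lemma varM_nonnegM : nonnegM nu -> forall A, measurable A -> varM nu A = nu A.
Proof.
move=> nu_ge0 A mA; rewrite /varM /charge_variation /=.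
by rewrite [jordan_neg _ A]jneg_nonnegM ?adde0 // [jordan_pos _ A]jpos_nonnegM.
Qed.

Lemma in_M_setI : in_M tau T nu -> forall A, measurable A -> nu A = nu (A `&` D).
Proof.
move=> nuD A mA; rewrite (chargeDI _ mA mD) (nuD (A `\` D)) ?add0e //.
exact: measurableD.
Qed.

Lemma pairMZ (g : R -> R) (k C : R) : continuous g -> (forall r, `|g r| <= C) ->
  pairM tau T nu (fun s => k * g s) = k * pairM tau T nu g.
Proof.
move=> cg gC; rewrite /pairM !RintegralZl ?mulrBr //.
all: exact: bounded_integrable _ mD (continuous_measurable_fun_on mD cg) gC.
Qed.

Lemma pairM_ramp_cvg (a b : R) :
  pairM tau T nu (ramp a b n) @[n --> \oo] --> fine (nu (`]a, b] `&` D)).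
Proof.
have mJ : measurable (`]a, b]%classic : set (measurableTypeR R)) by exact: measurable_itv.
have ramp_int_cvg (m : {finite_measure set (measurableTypeR R) -> \bar R}) :
    \int[m]_(s in D) ramp a b n s @[n --> \oo] --> fine (m (`]a, b] `&` D)).
  rewrite /Rintegral -integral_indic //; apply: (bounded_cvg_Rintegral m mD).
  - by move=> n; exact: continuous_measurable_fun_on mD (continuous_ramp a b n).
  - exact: measurable_indic.
  - by move=> r _; exact: ramp_cvg_indic.
  - by move=> n r; exact: normr_clamp01_le1.
have mJD : measurable (`]a, b] `&` D : set (measurableTypeR R)) by exact: measurableI.
rewrite sgnmeas_jordan // fineB ?fin_num_measure //.
by apply: cvgB; exact: ramp_int_cvg.
Qed.

Lemma pairM_nonnegM (g : R -> R) : nonnegM nu -> continuous g ->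
  pairM tau T nu g = \int[jpos nu]_(s in D) g s.
Proof.
move=> nu_ge0 cg; rewrite /pairM [X in _ - X]/Rintegral null_set_integral //.
- by rewrite subr0.
- by apply/measurable_EFinP; exact: continuous_measurable_fun_on mD cg.
- exact: jneg_nonnegM.
Qed.

Lemma tvnorm_nonnegM : nonnegM nu -> tvnorm tau T nu = pairM tau T nu (fun=> 1).
Proof.
move=> nu_ge0; rewrite pairM_nonnegM //; last exact: cst_continuous.
rewrite Rintegral_cst // mul1r /tvnorm varM_nonnegM //.
by congr fine; apply/esym/jpos_nonnegM.
Qed.

Lemma varM_ball_le_pairM_tent (s e : R) : nonnegM nu -> in_M tau T nu -> 0 < e ->
  (varM nu (ball s e) <= (pairM tau T nu (tent s e))%:E)%E.
Proof.
move=> nu_ge0 nuD e0.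
have mB : measurable (ball s e : set (measurableTypeR R)).
  exact: open_measurable (ball_open s e).
have mBD : measurable (ball s e `&` D : set (measurableTypeR R)) by exact: measurableI.
rewrite varM_nonnegM // in_M_setI // -jpos_nonnegM //.
rewrite -[jpos nu _]fineK ?fin_num_measure // lee_fin.
rewrite pairM_nonnegM //; last exact: continuous_tent.
have -> : fine (jpos nu (ball s e `&` D)) = \int[jpos nu]_(r in D) \1_(ball s e) r.
  by rewrite /Rintegral integral_indic.
apply: le_Rintegral => //.
- apply: (bounded_integrable _ mD (measurable_indic (D := D) mB)) => r.
  by rewrite indicE; case: (_ \in _); rewrite ?normr1 ?normr0.
- exact: bounded_integrable _ mD (continuous_measurable_fun_on mD (continuous_tent s e))
    (fun r => normr_clamp01_le1 _).
- move=> r _; rewrite indicE; have [rB|rB] := pselect (ball s e r).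
    by rewrite mem_set // tent_ball.
  by rewrite memNset // clamp01_ge0.
Qed.

End signed_measure.

Arguments pairMZ {R tau T nu g} k {C}.
Arguments in_M_setI {R tau T nu} _ {A}.
Arguments varM_ball_le_pairM_tent {R tau T nu} s {e}.

Section max_subdifferential.
Context {R : realType}.
Variables (tau T t : R) (x : R -> R) (nu : @sgnmeas R).
Hypothesis tau_ge0 : 0 <= tau.
Hypothesis It : II T t.
Hypothesis x_cont : {within Itau tau T, continuous x}.
Hypothesis nuD : in_M tau T nu.
Hypothesis nu_subdiff : forall w : R -> R, {within Itau tau T, continuous w} ->
  sup [set w s | s in win tau t] - sup [set x s | s in win tau t]
    >= pairM tau T nu (fun s => w s - x s).

Local Notation D := (Itau tau T).
Local Notation W := (win tau t).
Local Notation M := (sup [set x s | s in W]).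

Let win_sub : W `<=` D.
Proof.
have /andP[t0 tT] : 0 <= t <= T by move: It; rewrite /II /= in_itv.
move=> s; rewrite /win /Itau /= !in_itv /= => /andP[s1 s2].
by apply/andP; split; lra.
Qed.

Let win_t : W t.
Proof. by rewrite /win /= in_itv /= lexx andbT lerBlDr lerDl. Qed.

Lemma le_max_win s : W s -> x s <= M.
Proof.
move=> Ws; apply: sup_upper_bound; last by exists s.
apply: compact_has_sup; first by exists (x t), t.
apply: continuous_compact; last exact: segment_compact.
exact: continuous_subspaceW win_sub x_cont.
Qed.

Lemma pairM_le_max_bound (g : R -> R) (c : R) : continuous g ->
  (forall s, W s -> x s + g s <= M + c) -> pairM tau T nu g <= c.
Proof.
move=> cg xg_le.
have xg_cont : {within D, continuous (fun s => x s + g s)}.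
  have cg_D : {within D, continuous g} := continuous_subspaceT cg.
  by move=> s; exact: cvgD (x_cont s) (cg_D s).
have := nu_subdiff _ xg_cont.
have -> : (fun s => x s + g s - x s) = g by apply/funext => s; rewrite addrAC subrr add0r.
have : sup [set x s + g s | s in W] <= M + c.
  by apply: ge_sup; [exists (x t + g t), t | move=> _ [s Ws <-]; exact: xg_le].
lra.
Qed.

Lemma pairM_ge0 (h : R -> R) : continuous h -> (forall r, 0 <= h r <= 1) ->
  0 <= pairM tau T nu h.
Proof.
move=> ch h01.
have h1 r : `|h r| <= 1 by have /andP[h0 h1] := h01 r; rewrite ger0_norm.
have ch' : continuous (fun s => -1 * h s).
  by move=> r; apply: cvgM; [exact: cvg_cst | exact: ch].
have := @pairM_le_max_bound _ 0 ch'; rewrite (pairMZ (-1) ch h1).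
suff /[swap]/[apply] : forall s, W s -> x s + -1 * h s <= M + 0 by lra.
by move=> s Ws; have := le_max_win s Ws; have /andP[h0 _] := h01 s; lra.
Qed.

Lemma subdiff_max_nonnegM : nonnegM nu.
Proof.
apply: nonnegM_ocitv => a b.
have mJ : measurable (`]a, b]%classic : set (measurableTypeR R)) by exact: measurable_itv.
have mJD : measurable (`]a, b] `&` D : set (measurableTypeR R)).
  by apply: measurableI mJ _; exact: measurable_itv.
have ramp_cvg := pairM_ramp_cvg tau T nu a b.
have : 0 <= fine (nu (`]a, b] `&` D)).
  rewrite -(cvg_lim (@Rhausdorff R) ramp_cvg); apply: limr_ge; first exact: cvgP ramp_cvg.
  apply: nearW => n; apply: pairM_ge0; first exact: continuous_ramp.
  by move=> r; rewrite clamp01_ge0 clamp01_le1.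
by rewrite (in_M_setI nuD mJ) -lee_fin fineK ?fin_num_measure.
Qed.

Lemma subdiff_max_pairM1 : pairM tau T nu (fun=> 1) = 1.
Proof.
have c1 (k : R) : continuous (fun _ : R => k) by exact: cst_continuous.
have le_cst (k : R) : pairM tau T nu (fun=> k) <= k.
  by apply: (@pairM_le_max_bound _ k (c1 k)) => s Ws; rewrite lerD2r le_max_win.
have := le_cst (-1).
have -> : (fun _ : R => -1 : R) = (fun _ => -1 * 1) by apply/funext => s; rewrite mulr1.
rewrite (pairMZ (-1) (c1 1) (fun=> lexx `|1|)).
have := le_cst 1; lra.
Qed.

Lemma subdiff_max_tvnorm : tvnorm tau T nu = 1.
Proof. by rewrite tvnorm_nonnegM ?subdiff_max_pairM1 //; exact: subdiff_max_nonnegM. Qed.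

Let not_win_far s : ~ W s -> exists2 e, 0 < e & forall r, W r -> 2 * e <= `|r - s|.
Proof.
move=> Ws; have /nbhs_ballP[d d0 dW] : nbhs s (~` W).
  by apply: open_nbhs_nbhs; split => //; apply: closed_openC; exact: itv_closed.
exists (d / 2) => [|r Wr]; first by rewrite divr_gt0.
have : ~ ball s d r by move/dW.
rewrite -ball_normE /ball_ /= distrC => /negP; rewrite -leNgt; lra.
Qed.

Let lt_max_near s : W s -> x s < M ->
  exists2 eta, 0 < eta & exists2 e, 0 < e &
    forall r, W r -> `|r - s| < 2 * e -> x r <= M - eta.
Proof.
move=> Ws xs_lt; have eta0 : 0 < (M - x s) / 2 by rewrite divr_gt0 ?subr_gt0.
exists ((M - x s) / 2) => //.
have /cvgrPdist_lt/(_ _ eta0) := (@subspace_continuousP _ D _ x).1 x_cont s (win_sub _ Ws).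
rewrite near_withinE => /nbhs_ballP[d d0 xd].
exists (d / 2) => [|r Wr rs]; first by rewrite divr_gt0.
have : `|x s - x r| < (M - x s) / 2.
  by apply: xd (win_sub _ Wr); rewrite -ball_normE /ball_ /= distrC; lra.
rewrite distrC => /(le_lt_trans (ler_norm _)); lra.
Qed.

Lemma not_argmax_near s : ~ argmaxw tau t x s ->
  exists2 eta, 0 < eta & exists2 e, 0 < e &
    forall r, W r -> `|r - s| < 2 * e -> x r <= M - eta.
Proof.
move=> s_nmax; have [Ws|Ws] := pselect (W s).
  apply: lt_max_near => //; have [r [Wr xs_lt]] : exists r, W r /\ x s < x r.
    apply: contrapT => no_r; apply: s_nmax; split => // r Wr; rewrite leNgt.
    by apply/negP => xs_lt; apply: no_r; exists r.
  exact: lt_le_trans xs_lt (le_max_win r Wr).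
have [e e0 far] := not_win_far _ Ws.
exists 1 => //; exists e => // r Wr rs.
by have := far r Wr; lra.
Qed.

Lemma pairM_tent_le0 s e eta : 0 < e -> 0 < eta ->
  (forall r, W r -> `|r - s| < 2 * e -> x r <= M - eta) ->
  pairM tau T nu (tent s e) <= 0.
Proof.
move=> e0 eta0 x_le.
have tent1 r : `|tent s e r| <= 1 by exact: normr_clamp01_le1.
have c_tent : continuous (fun r => eta * tent s e r).
  by move=> r; apply: cvgM; [exact: cvg_cst | exact: continuous_tent].
rewrite -(pmulr_rle0 _ eta0) -(pairMZ eta (continuous_tent s e) tent1).
apply: (@pairM_le_max_bound _ 0 c_tent) => r Wr; rewrite addr0.
have [rs|rs] := ltP `|r - s| (2 * e).
  have := x_le r Wr rs; have := ler_piMr (ltW eta0) (clamp01_le1 (2 - `|r - s| / e)).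
  rewrite /tent; lra.
by rewrite tent_out // mulr0 addr0 le_max_win.
Qed.

Lemma subdiff_max_supp : suppM nu `<=` argmaxw tau t x.
Proof.
move=> s s_supp; apply: contrapT => s_nmax.
have [eta eta0 [e e0 x_le]] := not_argmax_near _ s_nmax.
have := s_supp _ (ball_open s e) (ballxx s e0).
have := varM_ball_le_pairM_tent s subdiff_max_nonnegM nuD e0.
have := pairM_tent_le0 _ _ _ e0 eta0 x_le.
rewrite -lee_fin => /[swap]/le_trans/[apply] /[swap]/lt_le_trans/[apply].
by rewrite ltxx.
Qed.

Lemma subdiff_max_argmax_prob :
  [/\ nonnegM nu, tvnorm tau T nu = 1 & suppM nu `<=` argmaxw tau t x].
Proof.
by split; [exact: subdiff_max_nonnegM | exact: subdiff_max_tvnorm | exact: subdiff_max_supp].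
Qed.

End max_subdifferential.

Arguments subdiff_max_argmax_prob {R tau T t x nu}.

Theorem corollary6p4 (R : realType) (n m : nat) (T tau : R)
    (F0 : 'rV[R]_n -> 'rV[R]_n -> 'rV[R]_n)
    (F1 : 'rV[R]_n -> 'rV[R]_n -> 'M[R]_(n, m))
    (phi : R -> 'rV[R]_n) (U : set 'rV[R]_m)
    (j : R -> 'rV[R]_n -> 'rV[R]_m -> R)
    (delta : R) (xs : R -> 'rV[R]_n) (us : R -> 'rV[R]_m)
    (xk : nat -> R -> 'rV[R]_n) (uk : nat -> R -> 'rV[R]_m)
    (sub : nat -> nat) (mu : R -> 'I_n -> @sgnmeas R) :
  (0 < n)%N -> (0 < m)%N -> 0 < T -> 0 < tau ->
  glob_lipschitz (fun p : 'rV[R]_n * 'rV[R]_n => F0 p.1 p.2) ->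
  C1 (fun p : 'rV[R]_n * 'rV[R]_n => F0 p.1 p.2) ->
  glob_lipschitz (fun p : 'rV[R]_n * 'rV[R]_n => F1 p.1 p.2) ->
  C1 (fun p : 'rV[R]_n * 'rV[R]_n => F1 p.1 p.2) ->
  {within Itau tau 0, continuous phi} ->
  U_assumptions U ->
  j_assumptions T j ->
  0 < delta ->
  local_sol_P T tau F0 F1 phi U j delta xs us ->
  (forall k, (0 < k)%N -> global_sol_Pk T tau F0 F1 phi U j delta us k (xk k) (uk k)) ->
  (forall p, (sub p < sub p.+1)%N) -> (0 < sub 0)%N ->
  Linf_w tau T mu ->
  wstar_limit tau T xk sub mu ->
  {ae @lebesgue_measure R, forall t, II T t -> in_subdiff_max tau T t xs mu} ->
  {ae @lebesgue_measure R, forall t, II T t ->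
     forall i : 'I_n,
       [/\ nonnegM (mu t i),
           tvnorm tau T (mu t i) = 1 &
           suppM (mu t i) `<=` argmaxw tau t (fun s => xs s ord0 i)]}.
Proof.
move=> _ _ _ tau0 _ _ _ _ _ _ _ _ [_ [xs_cont _ _ _] _] _ _ _ [mu_M _ _] _ mu_subdiff.
have ae_filter := ae_filter_ringOfSetsType (@lebesgue_measure R).
apply: filterS mu_subdiff => t mut_subdiff It i.
have xi_cont : {within Itau tau T, continuous (fun s => xs s ord0 i)}.
  by move=> s; have := continuous_comp (xs_cont s) (@coord_continuous _ _ _ ord0 i (xs s)).
exact: subdiff_max_argmax_prob (ltW tau0) It xi_cont (mu_M t i It) (mut_subdiff It i).
Qed.
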